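(* For every integer $n\ge 4$, \[ R_n(x)=\begin{cases} xR_{n-1}(x)+R_{n-2}(x), & \text{if } n \text{ is odd},\\ R_{n-1}(x)+x^2R_{n-2}(x), & \text{if } n \text{ is even}.\end{cases} \]
   Context: For $n\ge1$ let $\Xi_n$ (the $L$-fence) be the poset on $\{x_1,\dots,x_n\}$ whose cover relations are exactly: $x_2\prec x_1$, $x_3\prec x_2$, and for $3\le i\le n-1$, $x_i\prec x_{i+1}$ if $i$ is odd and $x_{i+1}\prec x_i$ if $i$ is even (so $x_1>x_2>x_3<x_4>x_5<\cdots$). A filter of a poset $P$ is a subset $F$ with $x\in F$, $x\le y\Rightarrow y\in F$. $\Omega_n$ is the lattice of filters of $\Xi_n$ ordered by reverse inclusion; $\Omega_0$ is the one-element lattice. The rank generating function of $\Omega_n$ is $R_n(x)=\sum_{F\in\Omega_n}x^{\,n-|F|}$, with $R_0(x)=1$. *)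

From mathcomp Require Import all_boot all_order all_algebra.
Unset Strict Implicit. Unset Printing Implicit Defensive.
Import GRing.Theory.
Local Open Scope ring_scope.

(* The element a : 'I_n of the L-fence represents x_(a+1).
   fence_cov n a b  <=>  x_(a+1) is covered by x_(b+1)  (x_(a+1) ≺ x_(b+1)). *)
Definition fence_cov (n : nat) : rel 'I_n := fun a b =>
  let i := (a + 1)%N in let j := (b + 1)%N in
  [|| (i == 2) && (j == 1),
      (i == 3) && (j == 2),
      [&& (3 <= i)%N, j == i.+1 & odd i]
    | [&& (3 <= j)%N, i == j.+1 & ~~ odd j] ].

Definition fence_le (n : nat) : rel 'I_n := connect (fence_cov n).

Definition is_filter (n : nat) (F : {set 'I_n}) : bool :=
  [forall x : 'I_n, forall y : 'I_n, (x \in F) && fence_le n x y ==> (y \in F)].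

Definition rankGF (n : nat) : {poly int} :=
  \sum_(F : {set 'I_n} | is_filter n F) 'X^(n - #|F|).

From mathcomp Require Import all_boot all_order all_algebra.
From mathcomp Require Import zify.
Import GRing.Theory.
Local Open Scope ring_scope.
Set Implicit Arguments.

(* Filters of Xi_(m+2) are the filters of Xi_(m+1), each with or without x_(m+2),
   subject only to the cover between x_(m+1) and x_(m+2).  Splitting R_(m+2) by
   membership of x_(m+2) thus gives, for each choice, either all of R_(m+1) or the
   part of it where x_(m+1) makes the same choice, times x when x_(m+2) is omitted.
   Since the covers alternate in direction, two such steps yield the recurrences. *)

Lemma is_filterP n (F : {set 'I_n}) :
  reflect (forall a b, fence_cov n a b -> a \in F -> b \in F) (is_filter n F).
Proof.
apply: (iffP forallP) => [H a b ab aF | H x].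
  by have /forallP/(_ b)/implyP := H a; apply; rewrite aF /fence_le connect1.
apply/forallP => y; apply/implyP => /andP[xF /connectP[p pth ->]].
elim: p x xF pth => //= z p IH x xF /andP[xz pth].
exact: IH (H _ _ xz xF) pth.
Qed.

Lemma fence_cov_irr n (a : 'I_n) : fence_cov n a a = false.
Proof.
by rewrite /fence_cov; case: eqP => [->|_] //=; rewrite !(ltn_eqF (ltnSn _)) !andbF.
Qed.

Lemma neq_ord_max_lt m (a : 'I_m.+1) : a != ord_max -> (a < m)%N.
Proof.
rewrite ltn_neqAle -ltnS ltn_ord andbT => ne.
by apply: contraNneq ne => e; apply/eqP; exact: val_inj.
Qed.

(* With 0-based indices, [ord_max : 'I_m.+2] is x_(m+2); [fence_rises m] says that
   x_(m+1) is covered by x_(m+2), and otherwise x_(m+2) is covered by x_(m+1). *)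
Definition fence_rises (m : nat) : bool := odd m.+1 && (3 <= m.+1)%N.

Lemma fence_cov_lift m (a b : 'I_m.+1) :
  fence_cov m.+2 (lift ord_max a) (lift ord_max b) = fence_cov m.+1 a b.
Proof. by rewrite /fence_cov !lift_max. Qed.

Lemma fence_cov_lift_max m (a : 'I_m.+1) :
  fence_cov m.+2 (lift ord_max a) ord_max = (a == ord_max) && fence_rises m.
Proof.
rewrite /fence_cov lift_max /= /fence_rises !addn1.
case: (eqVneq a ord_max) => [-> {a}|/neq_ord_max_lt a_lt_m] /=.
  by case: m => [|[|m]] //=; case: (odd m) => /=; lia.
lia.
Qed.

Lemma fence_cov_max_lift m (a : 'I_m.+1) :
  fence_cov m.+2 ord_max (lift ord_max a) = (a == ord_max) && ~~ fence_rises m.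
Proof.
rewrite /fence_cov lift_max /= /fence_rises !addn1.
case: (eqVneq a ord_max) => [-> {a}|/neq_ord_max_lt a_lt_m] /=.
  by case: m => [|[|m]] //=; case: (odd m) => /=; lia.
lia.
Qed.

Definition set_ext n (S : {set 'I_n}) (b : bool) : {set 'I_n.+1} :=
  [set i | if unlift ord_max i is Some j then j \in S else b].

Definition set_res n (F : {set 'I_n.+1}) : {set 'I_n} := [set j | lift ord_max j \in F].

Lemma in_set_ext_lift n (S : {set 'I_n}) b (j : 'I_n) :
  (lift ord_max j \in set_ext S b) = (j \in S).
Proof. by rewrite inE liftK. Qed.

Lemma in_set_ext_max n (S : {set 'I_n}) (b : bool) : (ord_max \in set_ext S b) = b.
Proof. by rewrite inE unlift_none. Qed.

Lemma set_resK n b : cancel (@set_ext n ^~ b) (@set_res n).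
Proof. by move=> S; apply/setP => j; rewrite inE in_set_ext_lift. Qed.

Lemma set_extK n (F : {set 'I_n.+1}) : set_ext (set_res F) (ord_max \in F) = F.
Proof.
by apply/setP => i; rewrite inE; case: unliftP => [j ->|->]; rewrite ?inE.
Qed.

Lemma card_set_ext n (S : {set 'I_n}) (b : bool) : #|set_ext S b| = (#|S| + b)%N.
Proof.
rewrite (cardD1 ord_max) in_set_ext_max addnC; congr (_ + _)%N.
rewrite -(card_imset S (@lift_inj _ ord_max)); apply: eq_card => i.
rewrite !inE; case: unliftP => [j ->|->].
  by rewrite eq_sym neq_lift mem_imset //; exact: lift_inj.
by rewrite eqxx; apply/esym/imsetP => -[j _ /eqP]; rewrite (negbTE (neq_lift _ _)).
Qed.

(* The only new cover joins x_(m+1) and x_(m+2): adding x_(m+2) above x_(m+1), or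
   omitting it below x_(m+1), is always allowed; otherwise x_(m+1) must follow suit. *)
Lemma is_filter_ext m (S : {set 'I_m.+1}) b :
  is_filter m.+2 (set_ext S b) =
  is_filter m.+1 S && ((fence_rises m == b) || ((ord_max \in S) == b)).
Proof.
apply/is_filterP/andP => [H | [/is_filterP HS ok] c d].
  split.
    apply/is_filterP => a c ac; have := H (lift ord_max a) (lift ord_max c).
    by rewrite fence_cov_lift !in_set_ext_lift; apply.
  case: b H => H; rewrite ?eqb_id ?eqbF_neg; case: (boolP (fence_rises m)) => //= rises.
  - have := H ord_max (lift ord_max ord_max).
    by rewrite fence_cov_max_lift eqxx rises in_set_ext_max in_set_ext_lift; apply.
  - have := H (lift ord_max ord_max) ord_max.
    rewrite fence_cov_lift_max eqxx rises in_set_ext_max in_set_ext_lift => notS.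
    by apply/negP => /(notS isT).
case: (unliftP ord_max c) => [a ->|->]; case: (unliftP ord_max d) => [e ->|->];
  rewrite ?fence_cov_lift ?fence_cov_lift_max ?fence_cov_max_lift ?fence_cov_irr //
          ?in_set_ext_lift ?in_set_ext_max.
- exact: HS.
- by case/andP => /eqP-> rises aS; move: ok; rewrite rises aS; case: b.
- by case/andP => /eqP-> /negPf rises bT; move: ok; rewrite rises bT; case: (_ \in S).
Qed.

Definition rankGF_max (n : nat) (b : bool) : {poly int} :=
  \sum_(F : {set 'I_n.+1} | is_filter n.+1 F && ((ord_max \in F) == b)) 'X^(n.+1 - #|F|).

Lemma rankGF_split n : rankGF n.+1 = rankGF_max n true + rankGF_max n false.
Proof.
rewrite /rankGF (bigID (fun F : {set 'I_n.+1} => ord_max \in F)) /=.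
by congr (_ + _); apply: eq_bigl => F; rewrite ?eqb_id ?eqbF_neg.
Qed.

Lemma rankGF_max_rec m b : rankGF_max m.+1 b =
  'X^(~~ b) * (if fence_rises m == b then rankGF m.+1 else rankGF_max m b).
Proof.
have weight (S : {set 'I_m.+1}) :
    'X^(m.+2 - #|set_ext S b|) = 'X^(~~ b) * 'X^(m.+1 - #|S|) :> {poly int}.
  rewrite card_set_ext -exprD; have := max_card S; rewrite card_ord.
  by case: b => /= le; congr 'X^_; lia.
rewrite /rankGF_max.
rewrite (reindex_onto (fun S : {set 'I_m.+1} => set_ext S b) (@set_res m.+1)) /=; last first.
  by move=> F /andP[_ /eqP <-]; exact: set_extK.
under eq_bigl => S do rewrite is_filter_ext in_set_ext_max set_resK !eqxx !andbT.
under eq_bigr => S _ do rewrite weight.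
rewrite -mulr_sumr; case: (fence_rises m == b) => //=.
by congr (_ * _); apply: eq_bigl => S; rewrite andbT.
Qed.

Theorem mainTheorem2 (n : nat) : (4 <= n)%N ->
  rankGF n = if odd n then 'X * rankGF n.-1 + rankGF n.-2
             else rankGF n.-1 + 'X^2 * rankGF n.-2.
Proof.
move=> n_ge4; have [k ->] : exists k, n = k.+4 by exists (n - 4)%N; lia.
rewrite rankGF_split !rankGF_max_rec /= /fence_rises /= !negbK.
rewrite !expr0 !expr1 !mul1r; case: (boolP (odd k)) => [k_odd | k_even] /=.
- have -> : (2 < k.+2)%N by case: k k_odd.
  by rewrite addrC.
- by rewrite mulrA -expr2.
Qed.
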